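(* Let $A$, $Q$ and $H\subseteq A^Q$ be non-empty finite sets and $\mathcal F$ a clone with carrier $A$ satisfying $\Delta^2$. Then $H\in\mathrm{Inv}_Q\mathcal F$ if and only if both of the following hold: (1) $H|_P\in\mathrm{Inv}_P\mathcal F$ for all $P\in[Q]^1\cup\{Q^{[B]}_H: B\in[A]^2\}$; (2) $H$ is decomposable over $[Q]^1\cup[Q]^{2,id}_H\cup\{Q^{[B]}_H:B\in[A]^2\}$.
   Context: $\mathcal O(A)=\bigcup_{n<\omega}A^{A^n}$; $\mathcal F_{[n]}=\mathcal F\cap A^{A^n}$. $A^2_2$ is the set of pairs $\mathbf a=a_0a_1\in A^2$ with $a_0\ne a_1$, $\mathrm{ran}\,\mathbf a=\{a_0,a_1\}$. A clone with carrier $A$ is a subset of $\mathcal O(A)$ containing all projections and closed under composition. For $f\in\mathcal O(A)_{[m]}$, $h_i\in A^Q$, $f(h_0,\dots,h_{m-1})$ is $q\mapsto f(h_0(q)\dots h_{m-1}(q))$; $\mathrm{Inv}_Q\mathcal F$ is the set of $H\subseteq A^Q$ closed under such compositions with $f\in\mathcal F$. $h|_P$ is the restriction of $h$ to $P\cap\mathrm{dom}\,h$, $H|_P=\{h|_P:h\in H\}$, $H(q)=\{h(q):h\in H\}$. For $R\subseteq Q$, $(H|_R)|^Q=\{f\in A^Q:f|_R\in H|_R\}$; $H$ is decomposable over $\mathscr R\subseteq\mathscr P(Q)$ if $H=\bigcap_{R\in\mathscr R}(H|_R)|^Q$. $[X]^k$ is the set of $k$-element subsets of $X$. $[Q]^{2,id}_H$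 is the set of $\{p,q\}\in[Q]^2$ with $h(p)=h(q)$ for all $h\in H$. For $B\subseteq A$, $Q^{[B]}_H=\{q\in Q: H(q)\subseteq B\}$. $\mathcal F$ satisfies $\Delta^2$ if for all $\mathbf a,\mathbf b\in A^2_2$ with $\mathrm{ran}\,\mathbf a\ne\mathrm{ran}\,\mathbf b$ and all $a\in\mathrm{ran}\,\mathbf a$, $b\in\mathrm{ran}\,\mathbf b$, there is $w\in\mathcal F_{[2]}$ with $w(\mathbf a)=a$, $w(\mathbf b)=b$ and $w(xx)=x$ for all $x\in A$. *)

From mathcomp Require Import all_boot.
Set Implicit Arguments. Unset Strict Implicit. Unset Printing Implicit Defensive.

Definition op (A : finType) (n : nat) := {ffun {ffun 'I_n -> A} -> A}.

(* a set of operations, given arity-wise (F_[n] = F n) *)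
Definition opset (A : finType) := forall n : nat, op A n -> Prop.

Definition is_clone (A : finType) (F : opset A) : Prop :=
  (forall n (i : 'I_n), F n [ffun x : {ffun 'I_n -> A} => x i]) /\
  (forall n m (f : op A m) (g : 'I_m -> op A n),
     F m f -> (forall i, F n (g i)) ->
     F n [ffun x : {ffun 'I_n -> A} => f [ffun i => g i x]]).

Definition pair2 (A : finType) (a0 a1 : A) : {ffun 'I_2 -> A} :=
  [ffun i : 'I_2 => if val i == 0 then a0 else a1].

Definition Delta2 (A : finType) (F : opset A) : Prop :=
  forall a0 a1 b0 b1 : A, a0 != a1 -> b0 != b1 ->
    [set a0; a1] != [set b0; b1] ->
    forall a b, a \in [set a0; a1] -> b \in [set b0; b1] ->
    exists w : op A 2, [/\ F 2 w, w (pair2 a0 a1) = a, w (pair2 b0 b1) = b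
                        & forall x, w (pair2 x x) = x].

Definition compose_pw (A D : finType) n (f : op A n) (h : 'I_n -> {ffun D -> A})
  : {ffun D -> A} := [ffun q => f [ffun i => h i q]].

Definition Inv (A D : finType) (F : opset A) (H : {set {ffun D -> A}}) : Prop :=
  forall n (f : op A n) (h : 'I_n -> {ffun D -> A}),
    F n f -> (forall i, h i \in H) -> compose_pw f h \in H.

Definition restr (A Q : finType) (P : {set Q}) (h : {ffun Q -> A})
  : {ffun {q : Q | q \in P} -> A} := [ffun q => h (val q)].

Definition restrset (A Q : finType) (P : {set Q}) (H : {set {ffun Q -> A}})
  : {set {ffun {q : Q | q \in P} -> A}} := [set restr P h | h in H].

Definition extend (A Q : finType) (R : {set Q}) (H : {set {ffun Q -> A}})
  : {set {ffun Q -> A}} := [set f | restr R f \in restrset R H].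

Definition decomposable (A Q : finType) (H : {set {ffun Q -> A}})
  (RR : {set {set Q}}) : Prop :=
  H = \bigcap_(R in RR) extend R H.

Definition singletons (Q : finType) : {set {set Q}} := [set [set q] | q : Q].

Definition pairs_id (A Q : finType) (H : {set {ffun Q -> A}}) : {set {set Q}} :=
  [set P : {set Q} | (#|P| == 2) &&
     [forall p in P, forall q in P, forall h in H, h p == h q]].

Definition QB (A Q : finType) (H : {set {ffun Q -> A}}) (B : {set A}) : {set Q} :=
  [set q | [forall h in H, h q \in B]].

Definition QB2 (A Q : finType) (H : {set {ffun Q -> A}}) : {set {set Q}} :=
  [set QB H B | B in [set B : {set A} | #|B| == 2]].

(* The converse direction is routine: restrictions of invariant relations are
   invariant, and so are their preimages [(H|_R)|^Q]; the sets in [Q]^{2,id}_H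
   only add the equation f p = f q to a singleton condition.

   For the direct direction, call f compatible with H on S if it satisfies on S
   every condition of the decomposition; we show by induction on |S| that f then
   agrees on S with a member of H.  In a minimal counterexample, for each t in S
   some r_t in H agrees with f off t and differs from f at t.  Applying Delta^2 to
   r_t and r_t' shows that all the pairs {f t, r_t t} are one 2-set B, and the
   condition for Q^{[B]}_H then yields h0 in H with c := h0 t0 outside B.  Moving
   f at t0 to c preserves compatibility, so by minimality c is carried by members
   of H to every other point, which forces f to be injective on S with values in
   B.  Hence S = {t0, t1}, and one more application of Delta^2 to a member of H
   separating t0 and t1 gives the contradiction. *)

From mathcomp Require Import all_boot.
Set Implicit Arguments. Unset Strict Implicit. Unset Printing Implicit Defensive.

Lemma eq_in_setD1 (T : finType) (U : Type) (R : {set T}) x (f g : T -> U) :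
  {in R :\ x, f =1 g} -> f x = g x -> {in R, f =1 g}.
Proof.
by move=> e ex q qR; case: (eqVneq q x) => [-> // | qx]; apply: e; rewrite !inE qx.
Qed.

Section Extension.
Variables (A Q : finType) (F : opset A) (H : {set {ffun Q -> A}}).
Implicit Types (R S : {set Q}) (f g h : {ffun Q -> A}).

Lemma extendP R f :
  reflect (exists2 h, h \in H & {in R, h =1 f}) (f \in extend R H).
Proof.
rewrite inE; apply: (iffP imsetP) => -[h hH e]; exists h => //.
- by move=> q qR; move/ffunP/(_ (exist _ q qR)): e; rewrite !ffunE.
- by apply/ffunP => -[q qR]; rewrite !ffunE /= e.
Qed.

Lemma extendS R R' f : R' \subset R -> f \in extend R H -> f \in extend R' H.
Proof.
by move=> sR /extendP[h hH e]; apply/extendP; exists h => //; apply: sub_in1 e; apply/subsetP.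
Qed.

Lemma extend_eq_on R f g : f \in extend R H -> {in R, f =1 g} -> g \in extend R H.
Proof. by move=> /extendP[h hH e] fg; apply/extendP; exists h => // q qR; rewrite e ?fg. Qed.

Lemma extendT f : (f \in extend [set: Q] H) = (f \in H).
Proof.
apply/extendP/idP => [[h hH e] | fH]; last by exists f.
by rewrite -(_ : h = f) //; apply/ffunP => q; apply: e.
Qed.

Lemma subset_extend R : H \subset extend R H.
Proof. by apply/subsetP => h hH; apply/extendP; exists h. Qed.

Lemma restr_compose_pw R n (o : op A n) (hs : 'I_n -> {ffun Q -> A}) :
  restr R (compose_pw o hs) = compose_pw o (fun i => restr R (hs i)).
Proof.
by apply/ffunP => q; rewrite !ffunE; congr (o _); apply/ffunP => i; rewrite !ffunE.
Qed.

Lemma Inv_restrset R : Inv F H -> Inv F (restrset R H).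
Proof.
move=> hI n o hs Fo hsH.
have hsR i : exists2 g, g \in H & hs i = restr R g by have /imsetP := hsH i.
have [gs gsH hsE] := fin_all_exists2 hsR.
suff -> : compose_pw o hs = restr R (compose_pw o gs) by apply: imset_f; apply: hI.
rewrite restr_compose_pw; apply/ffunP => q; rewrite !ffunE; congr (o _).
by apply/ffunP => i; rewrite !ffunE hsE ffunE.
Qed.

Lemma Inv_extend R : Inv F (restrset R H) -> Inv F (extend R H).
Proof.
move=> hI n o hs Fo hsR; rewrite inE restr_compose_pw; apply: hI => // i.
by have := hsR i; rewrite inE.
Qed.

Lemma Inv_bigcap (I : finType) (P : pred I) (G : I -> {set {ffun Q -> A}}) :
  (forall i, P i -> Inv F (G i)) -> Inv F (\bigcap_(i | P i) G i).
Proof.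
move=> GI n o hs Fo hsG; apply/bigcapP => i Pi; apply: GI => // j.
exact: (bigcapP (hsG j)).
Qed.

Lemma Inv_extend_const R p : p \in R ->
  {in R &, forall s t h, h \in H -> h s = h t} ->
  Inv F (restrset [set p] H) -> Inv F (extend R H).
Proof.
move=> pR Hc /Inv_extend hI n o hs Fo hsR.
have hs_const i : {in R &, forall s t, hs i s = hs i t}.
  by have /extendP[h hH e] := hsR i; move=> s t sR tR; rewrite -!e ?(Hc s t).
have /extendP[h hH hp] : compose_pw o hs \in extend [set p] H.
  by apply: hI => // i; apply: extendS (hsR i); rewrite sub1set.
apply/extendP; exists h => // s sR; rewrite (Hc s p) // hp ?set11 // !ffunE.
by congr (o _); apply/ffunP => i; rewrite !ffunE (hs_const i p s).
Qed.

Lemma pairs_id_set2 p q : p != q -> (forall h, h \in H -> h p = h q) ->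
  [set p; q] \in pairs_id H.
Proof.
move=> pq Hpq; rewrite inE cards2 pq /=.
apply/forall_inP => s /set2P sE; apply/forall_inP => t /set2P tE.
by apply/forall_inP => h hH; case: sE tE => -> [] ->; rewrite ?Hpq.
Qed.

Definition compatible S f : Prop :=
  [/\ {in S, forall q, f \in extend [set q] H},
      {in S &, forall p q, (forall h, h \in H -> h p = h q) -> f p = f q}
    & forall B : {set A}, #|B| = 2 -> f \in extend (S :&: QB H B) H].

Lemma compatibleS S S' f : S' \subset S -> compatible S f -> compatible S' f.
Proof.
move=> /subsetP sS [c1 c2 c3]; split; [exact: sub_in1 c1 | exact: sub_in2 c2 |].
by move=> B /c3; apply: extendS; apply: setSI; apply/subsetP.
Qed.

Lemma compatible_bigcap f :
  f \in \bigcap_(R in singletons Q :|: pairs_id H :|: QB2 H) extend R H ->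
  compatible [set: Q] f.
Proof.
move=> /bigcapP fR; split.
- by move=> q _; apply: fR; rewrite !in_setU imset_f.
- move=> p q _ _ Hpq; case: (eqVneq p q) => [-> // | pq].
  have /extendP[h hH e] : f \in extend [set p; q] H.
    by apply: fR; rewrite !in_setU pairs_id_set2 ?orbT.
  by rewrite -e ?set21 // -(e q) ?set22 // Hpq.
- move=> B B2; rewrite setTI; apply: fR.
  by rewrite in_setU imset_f ?orbT // inE B2.
Qed.
End Extension.

Section Delta2Decomposition.
Variables (A Q : finType) (F : opset A) (H : {set {ffun Q -> A}}).
Hypotheses (hD : Delta2 F) (hI : Inv F H).

(* k := w(h, g) coordinatewise; the idempotence of w keeps k equal to f on R. *)
Lemma Delta2_interpolate (R : {set Q}) (f h g : {ffun Q -> A}) p q a b :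
  h \in H -> g \in H -> {in R, h =1 f} -> {in R, g =1 f} ->
  h p != g p -> h q != g q -> [set h p; g p] != [set h q; g q] ->
  a \in [set h p; g p] -> b \in [set h q; g q] ->
  exists2 k, k \in H & [/\ k p = a, k q = b & {in R, k =1 f}].
Proof.
move=> hH gH hf gf np nq npq ha hb.
have [w [Fw wp wq wxx]] := hD np nq npq ha hb.
pose hg (i : 'I_2) := if val i == 0 then h else g.
have kE t : compose_pw w hg t = w (pair2 (h t) (g t)).
  by rewrite ffunE; congr (w _); apply/ffunP => i; rewrite !ffunE /hg; case: (val i == 0).
exists (compose_pw w hg); first by apply: hI => // i; rewrite /hg; case: (val i == 0).
by split; rewrite ?kE // => t tR; rewrite kE hf // gf // wxx.
Qed.

Hypothesis hH : H != set0.

Section MinimalCounterexample.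
Variables (S : {set Q}) (f : {ffun Q -> A}).
Hypothesis IH :
  forall (S' : {set Q}) f', S' \proper S -> compatible H S' f' -> f' \in extend S' H.
Hypotheses (fS : compatible H S f) (nfS : f \notin extend S H).

Lemma card_gt1 : 1 < #|S|.
Proof.
rewrite ltnNge; apply: contra nfS => /card_le1_eqP S1.
case: (set_0Vmem S) => [-> | [q qS]].
  by case/set0Pn: hH => h hH'; apply/extendP; exists h => // q; rewrite inE.
have [c1 _ _] := fS; apply: extendS (c1 q qS).
by apply/subsetP => t tS; rewrite inE; apply/eqP; apply: S1.
Qed.

Lemma other_point t0 : exists2 t1, t1 \in S & t1 != t0.
Proof.
have [x [y [xS yS xy]]] := card_gt1P card_gt1.
by case: (eqVneq x t0) => [xt0 | ]; [exists y; rewrite // -xt0 eq_sym | exists x].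
Qed.

Lemma off_witness t : t \in S -> exists2 r, r \in H & {in S :\ t, r =1 f}.
Proof.
move=> tS; apply/extendP; apply: IH (properD1 tS) _.
exact: compatibleS (subsetDl _ _) fS.
Qed.

Lemma off_neq t r : t \in S -> r \in H -> {in S :\ t, r =1 f} -> r t != f t.
Proof.
move=> tS rH rf; apply: contraNneq nfS => rt.
by apply/extendP; exists r => //; apply: eq_in_setD1 rf rt.
Qed.

Lemma no_twin t q : t \in S -> q \in S -> q != t -> ~ (forall h, h \in H -> h t = h q).
Proof.
move=> tS qS qt Htq; have [_ c2 _] := fS; have [r rH rf] := off_witness tS.
move/eqP: (off_neq tS rH rf); apply.
by rewrite Htq // rf ?inE ?qt //; apply: c2 => // h hH'; apply/esym/Htq.
Qed.

Lemma defect_pair_eq t t' r r' : t \in S -> t' \in S -> t != t' -> r \in H -> r' \in H ->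
  {in S :\ t, r =1 f} -> {in S :\ t', r' =1 f} -> [set f t; r t] = [set f t'; r' t'].
Proof.
move=> tS t'S tt' rH r'H rf r'f; apply/eqP; apply: contraNT nfS => ne.
have r't : r' t = f t by apply: r'f; rewrite !inE tt' tS.
have rt' : r t' = f t' by apply: rf; rewrite !inE eq_sym tt' t'S.
have sub' : {subset S :\ t :\ t' <= S :\ t'} by move=> s; rewrite !inE => /and3P[-> _ ->].
have [k kH [kt kt' kf]] :
    exists2 k, k \in H & [/\ k t = f t, k t' = f t' & {in S :\ t :\ t', k =1 f}].
  apply: (Delta2_interpolate r'H rH (sub_in1 sub' r'f) (sub_in1 (subsetP (subsetDl _ _)) rf)).
  - by rewrite r't eq_sym; exact: off_neq.
  - by rewrite rt'; exact: off_neq.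
  - by rewrite r't rt' (setUC [set r' t']).
  - by rewrite r't set21.
  - by rewrite rt' set22.
by apply/extendP; exists k => //; apply: eq_in_setD1 kt; apply: eq_in_setD1 kf kt'.
Qed.

Lemma defect_set : exists2 B : {set A}, #|B| = 2 &
  forall t r, t \in S -> r \in H -> {in S :\ t, r =1 f} -> [set f t; r t] = B.
Proof.
have [t0 t0S] : exists t0, t0 \in S by apply/card_gt0P; apply: ltnW card_gt1.
have [r0 r0H r0f] := off_witness t0S.
exists [set f t0; r0 t0]; first by rewrite cards2 eq_sym off_neq.
move=> t r tS rH rf; case: (eqVneq t t0) => [tt0 | tt0]; last exact: defect_pair_eq.
have [t1 t1S t1t0] := other_point t0; have [r1 r1H r1f] := off_witness t1S.
move: tS rf; rewrite tt0 => tS rf.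
by rewrite (defect_pair_eq _ t1S _ rH r1H rf r1f) ?(defect_pair_eq _ t1S _ r0H r1H r0f r1f)
  // eq_sym.
Qed.

Section Defect.
Variable B : {set A}.
Hypotheses (B2 : #|B| = 2)
  (hB : forall t r, t \in S -> r \in H -> {in S :\ t, r =1 f} -> [set f t; r t] = B).

Lemma f_in_defect t : t \in S -> f t \in B.
Proof. by move=> tS; have [r rH rf] := off_witness tS; rewrite -(hB tS rH rf) set21. Qed.

Lemma off_in_defect t r : t \in S -> r \in H -> {in S :\ t, r =1 f} -> r t \in B.
Proof. by move=> tS rH rf; rewrite -(hB tS rH rf) set22. Qed.

Lemma escape : exists t0 h0, [/\ t0 \in S, h0 \in H & h0 t0 \notin B].
Proof.
have : ~~ [forall t in S, forall h in H, h t \in B].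
  apply: contra nfS => /forall_inP SB; have [_ _ c3] := fS.
  apply: extendS (c3 B B2); apply/subsetP => t tS; rewrite inE tS inE; exact: SB.
by case/forall_inPn => t tS /forall_inPn[h hH0 ht]; exists t, h.
Qed.

Lemma escape_compatible t0 c : t0 \in S -> c \notin B -> (exists2 h, h \in H & h t0 = c) ->
  compatible H S [ffun q => if q == t0 then c else f q].
Proof.
move=> t0S cB [e eH et0]; set g := [ffun q => _].
have gf : {in S :\ t0, g =1 f} by move=> q; rewrite !inE ffunE => /andP[/negbTE -> _].
have [c1 c2 c3] := fS; split.
- move=> q qS; case: (eqVneq q t0) => [-> | qt0].
    by apply/extendP; exists e => // s /set1P ->; rewrite ffunE eqxx.
  by apply: extend_eq_on (c1 q qS) _ => s /set1P ->; rewrite gf // !inE qt0.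
- move=> p q pS qS Hpq.
  case: (eqVneq p t0) => [pt0 | pt0]; case: (eqVneq q t0) => [qt0 | qt0].
  + by rewrite pt0 qt0.
  + by case: (no_twin t0S qS qt0); rewrite -pt0.
  + by case: (no_twin t0S pS pt0) => h' hH'; rewrite -qt0 Hpq.
  + by rewrite !gf ?inE ?pt0 ?qt0 //; apply: c2.
- move=> B' B'2; case: (boolP (t0 \in QB H B')) => [t0B' | t0B'].
    have [r0 r0H r0f] := off_witness t0S.
    have /extendP[hf hfH hft0] := c1 t0 t0S.
    have B't0 k : k \in H -> k t0 \in B' by move: t0B'; rewrite inE => /forall_inP; apply.
    have : 2 < #|B'|.
      apply/card_gt2P; exists (f t0), (r0 t0), c; split; split.
      - by rewrite -(hft0 t0) ?set11 // B't0.
      - exact: B't0.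
      - by rewrite -et0 B't0.
      - by rewrite eq_sym off_neq.
      - by apply: contraNneq cB => <-; apply: off_in_defect r0f.
      - by apply: contraNneq cB => ->; apply: f_in_defect.
    by rewrite B'2.
  apply: extend_eq_on (c3 B' B'2) _ => s /setIP[sS sB']; rewrite gf // !inE sS andbT.
  by apply: contraNneq t0B' => <-.
Qed.

Lemma escape_exists t0 t1 c : t0 \in S -> t1 \in S -> t1 != t0 -> c \notin B ->
  (exists2 h, h \in H & h t0 = c) ->
  exists2 e, e \in H & {in S :\ t0 :\ t1, e =1 f} /\ e t0 = c.
Proof.
move=> t0S t1S t10 cB hc.
have /extendP[e eH ef] := IH (properD1 t1S)
  (compatibleS (subsetDl _ _) (escape_compatible t0S cB hc)).
exists e => //; split; last by rewrite ef ?ffunE ?eqxx // !inE eq_sym t10.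
by move=> s; rewrite !inE => /and3P[st1 st0 sS]; rewrite ef ?ffunE ?(negbTE st0) // !inE st1.
Qed.

Lemma escape_propagate t0 t1 c e : t0 \in S -> t1 \in S -> t1 != t0 -> c \notin B ->
  e \in H -> {in S :\ t0 :\ t1, e =1 f} -> e t0 = c -> e t1 = c /\ f t1 != f t0.
Proof.
move=> t0S t1S t10 cB eH ef et0.
have [r0 r0H r0f] := off_witness t0S.
have r0t1 : r0 t1 = f t1 by apply: r0f; rewrite !inE t10.
have off_t0 k : k \in H -> {in S :\ t0, k =1 f} -> k t0 != c.
  by move=> kH kf; apply: contraNneq cB => <-; apply: off_in_defect kf.
have et1 : e t1 != f t1.
  by apply/eqP => et1; move: (off_t0 e eH (eq_in_setD1 ef et1)); rewrite et0 eqxx.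
have ranges : [set c; r0 t0] = [set e t1; f t1].
  apply/eqP; apply: contraT => ne.
  have [k kH [kt0 kt1 kf]] :
      exists2 k, k \in H & [/\ k t0 = c, k t1 = f t1 & {in S :\ t0 :\ t1, k =1 f}].
    apply: (Delta2_interpolate eH r0H ef (sub_in1 (subsetP (subsetDl _ _)) r0f)).
    - by rewrite et0; apply: contraNneq cB => ->; apply: off_in_defect r0f.
    - by rewrite r0t1.
    - by rewrite et0 r0t1.
    - by rewrite et0 set21.
    - by rewrite r0t1 set22.
  by move: (off_t0 k kH (eq_in_setD1 kf kt1)); rewrite kt0 eqxx.
have ft1 : f t1 = r0 t0.
  have : f t1 \in [set c; r0 t0] by rewrite ranges set22.
  by case/set2P => // ft1c; move: cB; rewrite -ft1c f_in_defect.
split; last by rewrite ft1 off_neq.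
have : e t1 \in [set c; r0 t0] by rewrite ranges set21.
by case/set2P => // et1r; move: et1; rewrite et1r ft1 eqxx.
Qed.

Lemma escape_no_third_point t0 t1 t2 c : t0 \in S -> t1 \in S -> t2 \in S ->
  t1 != t0 -> t2 != t0 -> t2 != t1 -> c \notin B -> (exists2 h, h \in H & h t0 = c) ->
  False.
Proof.
move=> t0S t1S t2S t10 t20 t21 cB hc.
have [e1 e1H [e1f e1t0]] := escape_exists t0S t1S t10 cB hc.
have [e1t1 f10] := escape_propagate t0S t1S t10 cB e1H e1f e1t0.
have [e2 e2H [e2f e2t0]] := escape_exists t0S t2S t20 cB hc.
have [_ f20] := escape_propagate t0S t2S t20 cB e2H e2f e2t0.
have [e3 e3H [e3f e3t1]] := escape_exists t1S t2S t21 cB (ex_intro2 _ _ e1 e1H e1t1).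
have [_ f21] := escape_propagate t1S t2S t21 cB e3H e3f e3t1.
suff : 2 < #|B| by rewrite B2.
apply/card_gt2P; exists (f t0), (f t1), (f t2); rewrite !f_in_defect //.
by split=> //; split; rewrite // eq_sym.
Qed.

Lemma escape_two_points t0 t1 c : t0 \in S -> t1 \in S -> t1 != t0 ->
  S :\ t0 :\ t1 = set0 -> c \notin B -> (exists2 h, h \in H & h t0 = c) -> False.
Proof.
move=> t0S t1S t10 S01 cB hc; have t01 : t0 != t1 by rewrite eq_sym.
have vac k : {in S :\ t0 :\ t1, k =1 f} by rewrite S01 => s; rewrite inE.
have vac' k : {in S :\ t1 :\ t0, k =1 f}.
  by move=> s sS; apply: vac; move: sS; rewrite !inE => /and3P[-> -> ->].
have [e1 e1H [_ e1t0]] := escape_exists t0S t1S t10 cB hc.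
have [e1t1 f10] := escape_propagate t0S t1S t10 cB e1H (vac e1) e1t0.
have [d dH d01] : exists2 d, d \in H & d t0 != d t1.
  apply/exists_inP; apply: contraNT f10 => /exists_inPn d01; have [_ c2 _] := fS.
  by apply/eqP; apply: c2 => // h hH'; apply/esym/eqP; move: (d01 h hH'); rewrite negbK.
have dt0 : d t0 != c.
  apply/eqP => dt0; have [dt1 _] := escape_propagate t0S t1S t10 cB dH (vac d) dt0.
  by rewrite dt0 dt1 eqxx in d01.
have dt1 : d t1 != c.
  apply/eqP => dt1; have [dt0' _] := escape_propagate t1S t0S t01 cB dH (vac' d) dt1.
  by rewrite dt0' dt1 eqxx in d01.
have [k kH [kt0 kt1 _]] :
    exists2 k, k \in H & [/\ k t0 = c, k t1 = d t1 & {in S :\ t0 :\ t1, k =1 f}].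
  apply: (Delta2_interpolate dH e1H (vac d) (vac e1)).
  - by rewrite e1t0.
  - by rewrite e1t1.
  - rewrite e1t0 e1t1; apply/eqP => /setP/(_ (d t0)).
    by rewrite !in_set2 eqxx (negbTE d01) (negbTE dt0).
  - by rewrite e1t0 set22.
  - by rewrite set21.
have [kt1c _] := escape_propagate t0S t1S t10 cB kH (vac k) kt0.
by move: dt1; rewrite -kt1 kt1c eqxx.
Qed.

Lemma defect_false : False.
Proof.
have [t0 [h0 [t0S h0H h0B]]] := escape.
have [t1 t1S t10] := other_point t0.
have hc : exists2 h, h \in H & h t0 = h0 t0 by exists h0.
case: (set_0Vmem (S :\ t0 :\ t1)) => [S01 | [t2]].
  exact: escape_two_points t0S t1S t10 S01 h0B hc.
rewrite !inE => /and3P[t21 t20 t2S].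
exact: escape_no_third_point t0S t1S t2S t10 t20 t21 h0B hc.
Qed.

End Defect.

Lemma no_minimal_counterexample : False.
Proof. by have [B B2 hB] := defect_set; apply: (defect_false B2 hB). Qed.

End MinimalCounterexample.

Lemma compatible_extend S f : compatible H S f -> f \in extend S H.
Proof.
have [n] := ubnP #|S|; elim: n S f => // n IHn S f; rewrite ltnS => Sn fS.
have IH (S' : {set Q}) f' : S' \proper S -> compatible H S' f' -> f' \in extend S' H.
  by move=> S'S; apply: IHn; apply: leq_trans (proper_card S'S) Sn.
by apply: contraT => nfS; case: (no_minimal_counterexample IH fS nfS).
Qed.

End Delta2Decomposition.

Theorem theorem3 (A Q : finType) (H : {set {ffun Q -> A}}) (F : opset A)
  (hA : 0 < #|A|) (hQ : 0 < #|Q|) (hH : H != set0)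
  (hF : is_clone F) (hD : Delta2 F) :
  Inv F H <->
  ((forall P : {set Q}, P \in singletons Q :|: QB2 H -> Inv F (restrset P H)) /\
   decomposable H (singletons Q :|: pairs_id H :|: QB2 H)).
Proof.
split=> [hI | [hInv hdec]].
- split=> [P _ | ]; first exact: Inv_restrset.
  apply/eqP; rewrite eqEsubset; apply/andP; split.
    by apply/bigcapsP => R _; apply: subset_extend.
  apply/subsetP => f /compatible_bigcap /(compatible_extend hD hI hH).
  by rewrite extendT.
- rewrite hdec; apply: Inv_bigcap => R; rewrite !in_setU -orbA => /or3P[RQ | Rid | RB].
  + by apply: Inv_extend; apply: hInv; rewrite in_setU RQ.
  + move: Rid; rewrite inE => /andP[/eqP R2 Rc].
    have [p pR] : exists p, p \in R by apply/card_gt0P; rewrite R2.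
    apply: (Inv_extend_const pR); last by apply: hInv; rewrite in_setU imset_f.
    move=> s t sR tR h hH'; apply/eqP.
    exact: (forall_inP (forall_inP (forall_inP Rc s sR) t tR) h hH').
  + by apply: Inv_extend; apply: hInv; rewrite in_setU RB orbT.
Qed.
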